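(* For every ALC game $G$, the algorithm ASF applied to $G$ terminates, and the game it returns is equivalent to $G$.
   Context: Linear clobber: Left owns black stones $\mathtt{x}$, Right owns white stones $\mathtt{o}$, on a path of cells each empty or holding a stone. A move: a player chooses one of their stones adjacent (consecutive on the path) to an opponent stone, removes the opponent stone and moves their own stone into that cell, emptying its original cell. Players alternate; whoever cannot move loses. A part is a maximal block of consecutive non-empty cells, written as a word over $\{\mathtt{o},\mathtt{x}\}$ (concatenation, exponents for repetition); a part and its reversal are identified; a position (game) is the disjoint sum (multiset) of its parts. For a part $p$, $-p$ swaps all colors. A part is trivial if no two adjacent stones differ in color. An ALC game is a finite sum of non-trivial parts each of which appears in some position reachable by legal moves from a single part $(\mathtt{ox})^n$, $n\ge 1$. Games $G,H$ are equivalent if for every game $X$, the sums $G+X$ and $H+X$ have the same outcome class (outcome class: which players have a winning strategy when moving first). Algorithm ASF: given a game (multiset of parts), repeatedly apply the first applicable rule in the preference order $\alpha,-\alpha,\beta,-\beta,\gamma,-\gamma,\delta,-\delta,\varepsilon,-\varepsilon,\zeta,-\zeta,\eta,-\eta$ until no rule applies, and return the result. Each rule replaces one part (matched up to reversal) by the listed parts (''nothing'' means the part is deleted): $\alpha$: each of $\mathtt{o},\mathtt{oo},\mathtt{ooo},\mathtt{ooxx},\mathtt{oxoxox}$ is replaced by nothing. $\beta$: if parts $p$ and $-p$ are both present, delete both. $\gamma$: each of $\mathtt{oxo},\mathtt{ooxox},\mathtt{ooxoxoo},\mathtt{xxoxoxx}$ is replaced by $\mathtt{ox}$. $\delta$: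 $\mathtt{oxoxoxoxo}$ is replaced by $\mathtt{ooxo}$. $\varepsilon$: each of $\mathtt{ooxoxx}$, $\mathtt{oxoxoxoxoxox}$ is replaced by the two parts $\mathtt{oxox}$ and $\mathtt{ox}$. $\zeta$: $\mathtt{ooxoo}$ is replaced by $\mathtt{oox}$. $\eta$: $\mathtt{ooxo}$ is replaced by the two parts $\mathtt{xxo}$ and $\mathtt{ox}$. For a rule $\rho$, the rule $-\rho$ is obtained by replacing every part on both sides of $\rho$ by its negative (e.g. $-\alpha$ deletes each of $\mathtt{x},\mathtt{xx},\mathtt{xxx},\mathtt{xxoo},\mathtt{xoxoxo}$). *)

From mathcomp Require Import all_boot.
Set Implicit Arguments. Unset Strict Implicit. Unset Printing Implicit Defensive.

(* A stone: true = black x (Left), false = white o (Right). *)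
Definition cX : bool := true.
Definition cO : bool := false.

(* A part is a word over {o,x}; a game (position) is a finite list of parts,
   read as a multiset (all notions below are invariant under reordering). *)
Definition word := seq bool.
Definition game := seq word.

Definition clean (g : game) : game := filter (fun q => q != [::]) g.

(* All results (as lists of parts) of a move by player b (true = Left)
   inside the part p.  At the adjacent cells i, i+1 with different colours,
   the stone of b captures the other one and its original cell becomes empty,
   splitting the part. *)
Definition part_moves (b : bool) (p : word) : seq game :=
  flatten [seq (if nth b p i != nth b p i.+1 then
                  (if nth b p i == b
                   then [:: clean [:: take i p; b :: drop i.+2 p]]
                   else [:: clean [:: rcons (take i p) b; drop i.+2 p]])
                else [::]) | i <- iota 0 (size p).-1].

Definition game_moves (b : bool) (G : game) : seq game :=
  flatten [seq [seq take j G ++ r ++ drop j.+1 G | r <- part_moves b (nth [::] G j)]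
          | j <- iota 0 (size G)].

Definition stones (G : game) : nat := sumn (map size G).

(* win b n G : the player b, moving first in G, has a winning strategy
   (normal play), computed with fuel n; each move removes exactly one stone,
   so fuel (stones G).+1 is exact. *)
Fixpoint win (b : bool) (n : nat) (G : game) : bool :=
  match n with
  | 0 => false
  | n'.+1 => has (fun G' => ~~ win (~~ b) n' G') (game_moves b G)
  end.

Definition first_wins (b : bool) (G : game) : bool := win b (stones G).+1 G.

Definition outcome (G : game) : bool * bool := (first_wins true G, first_wins false G).

Definition game_equiv (G H : game) : Prop :=
  forall X : game, all (fun q => q != [::]) X -> outcome (G ++ X) = outcome (H ++ X).

Inductive reach : game -> game -> Prop :=
| reach_refl G : reach G G
| reach_step G G' G'' :
    G' \in game_moves true G ++ game_moves false G -> reach G' G'' -> reach G G''.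

Definition ox_n (n : nat) : word := flatten (nseq n [:: cO; cX]).

Definition nontrivial (p : word) : bool :=
  has (fun i => nth false p i != nth false p i.+1) (iota 0 (size p).-1).

Definition alc_part (p : word) : Prop :=
  exists n, 0 < n /\ exists P, reach [:: ox_n n] P /\ (p \in P \/ rev p \in P).

Definition alc (G : game) : Prop :=
  all nontrivial G /\ forall p, p \in G -> alc_part p.

Definition negw (p : word) : word := map negb p.

Definition matches (q w : word) : bool := (q == w) || (q == rev w).

Inductive Rule :=
| Simple of seq (word * seq word)   (* replace a part matching lhs by the parts rhs *)
| Beta.                             (* delete a pair p, -p *)

Definition neg_rule (rs : seq (word * seq word)) : seq (word * seq word) :=
  [seq (negw lr.1, map negw lr.2) | lr <- rs].

Definition r_alpha : seq (word * seq word) :=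
  [:: ([:: cO], [::]);
      ([:: cO; cO], [::]);
      ([:: cO; cO; cO], [::]);
      ([:: cO; cO; cX; cX], [::]);
      ([:: cO; cX; cO; cX; cO; cX], [::])].

Definition r_gamma : seq (word * seq word) :=
  [:: ([:: cO; cX; cO], [:: [:: cO; cX]]);
      ([:: cO; cO; cX; cO; cX], [:: [:: cO; cX]]);
      ([:: cO; cO; cX; cO; cX; cO; cO], [:: [:: cO; cX]]);
      ([:: cX; cX; cO; cX; cO; cX; cX], [:: [:: cO; cX]])].

Definition r_delta : seq (word * seq word) :=
  [:: ([:: cO; cX; cO; cX; cO; cX; cO; cX; cO], [:: [:: cO; cO; cX; cO]])].

Definition r_epsilon : seq (word * seq word) :=
  [:: ([:: cO; cO; cX; cO; cX; cX], [:: [:: cO; cX; cO; cX]; [:: cO; cX]]);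
      ([:: cO; cX; cO; cX; cO; cX; cO; cX; cO; cX; cO; cX],
         [:: [:: cO; cX; cO; cX]; [:: cO; cX]])].

Definition r_zeta : seq (word * seq word) :=
  [:: ([:: cO; cO; cX; cO; cO], [:: [:: cO; cO; cX]])].

Definition r_eta : seq (word * seq word) :=
  [:: ([:: cO; cO; cX; cO], [:: [:: cX; cX; cO]; [:: cO; cX]])].

(* preference order alpha,-alpha,beta,-beta,gamma,-gamma,...,eta,-eta
   (-beta coincides with beta) *)
Definition asf_rules : seq Rule :=
  [:: Simple r_alpha; Simple (neg_rule r_alpha); Beta; Beta;
      Simple r_gamma; Simple (neg_rule r_gamma);
      Simple r_delta; Simple (neg_rule r_delta);
      Simple r_epsilon; Simple (neg_rule r_epsilon);
      Simple r_zeta; Simple (neg_rule r_zeta);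
      Simple r_eta; Simple (neg_rule r_eta)].

Definition del2 (i j : nat) (G : game) : game :=
  [seq nth [::] G k | k <- iota 0 (size G) & (k != i) && (k != j)].

Definition rule_results (r : Rule) (G : game) : seq game :=
  match r with
  | Simple rs =>
      flatten [seq [seq take i G ++ lr.2 ++ drop i.+1 G
                   | lr <- rs & matches (nth [::] G i) lr.1]
              | i <- iota 0 (size G)]
  | Beta =>
      flatten [seq [seq del2 i j G
                   | j <- iota 0 (size G)
                   & (i != j) && matches (nth [::] G j) (negw (nth [::] G i))]
              | i <- iota 0 (size G)]
  end.

Definition asf_step (G H : game) : Prop :=
  exists k, k < size asf_rules /\
    H \in rule_results (nth Beta asf_rules k) G /\
    (forall k', k' < k -> rule_results (nth Beta asf_rules k') G = [::]).

Inductive asf_star : game -> game -> Prop :=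
| asf_refl G : asf_star G G
| asf_trans G G' G'' : asf_step G G' -> asf_star G' G'' -> asf_star G G''.

Definition asf_normal (G : game) : bool :=
  all (fun r => rule_results r G == [::]) asf_rules.

From mathcomp Require Import all_boot zify.
Set Implicit Arguments. Unset Strict Implicit. Unset Printing Implicit Defensive.

(* Every simple rule of ASF replaces a part p by parts q_1, ..., q_k such that
   p + (-q_1) + ... + (-q_k) is a second-player win, which is checked by
   exhaustive search; rule beta deletes p + (-p), a second-player win by the
   mirror strategy.  Adding a second-player win to a sum does not change who
   wins moving first, so p + Y, p + (-q_1) + ... + (-q_k) + q_1 + ... + q_k + Y
   and q_1 + ... + q_k + Y have the same outcome for every context Y: each step
   is an equivalence, whatever the game and whichever rule is preferred.  Termination: every rule decreases the total
   weight, where a part weighs one more than its length, except ox (1),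
   oxox (2) and ooxo, xxox (6), up to reversal. *)

Lemma nth_size_cat (T : Type) (x0 : T) (s1 s2 : seq T) i :
  nth x0 (s1 ++ s2) (size s1 + i) = nth x0 s2 i.
Proof. by rewrite -nth_drop drop_size_cat. Qed.

Lemma drop_size_cat_add (T : Type) (s1 s2 : seq T) i :
  drop (size s1 + i) (s1 ++ s2) = drop i s2.
Proof. by rewrite addnC -drop_drop drop_size_cat. Qed.

Lemma take_size_cat_add (T : Type) (s1 s2 : seq T) i :
  take (size s1 + i) (s1 ++ s2) = s1 ++ take i s2.
Proof. by rewrite take_cat ltnNge leq_addr addKn. Qed.

Lemma drop_cat_leq (T : Type) n (s1 s2 : seq T) :
  n <= size s1 -> drop n (s1 ++ s2) = drop n s1 ++ s2.
Proof.
rewrite drop_cat leq_eqVlt => /predU1P [-> | lt_n]; last by rewrite lt_n.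
by rewrite ltnn subnn drop_size drop0.
Qed.

Lemma perm_cat_cons (T : eqType) (A B : seq T) x : perm_eq (A ++ x :: B) (x :: A ++ B).
Proof. exact/permPl/(perm_catCA A [:: x] B). Qed.

Lemma part_movesP b p r :
  reflect (exists u v, p = u ++ [:: b, ~~ b & v] /\ r = clean [:: u; b :: v] \/
                       p = u ++ [:: ~~ b, b & v] /\ r = clean [:: rcons u b; v])
          (r \in part_moves b p).
Proof.
apply: (iffP flatten_mapP) => [[i] | [u [v E]]].
- rewrite mem_iota add0n => /andP [_ lt_i].
  have Ep : p = take i p ++ [:: nth b p i, nth b p i.+1 & drop i.+2 p].
    by rewrite -!drop_nth ?cat_take_drop //; lia.
  move: Ep; case: (nth b p i) (nth b p i.+1) => [] [] Ep //=;
    case: b Ep => Ep; rewrite inE => /eqP ->;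
    exists (take i p), (drop i.+2 p); by [left | right].
- exists (size u); first by case: E => -[-> _]; rewrite mem_iota size_cat /=; lia.
  case: E => -[-> ->]; rewrite -[size u]addn0 take_size_cat_add nth_size_cat -addnS.
  all: rewrite nth_size_cat -addnS drop_size_cat_add take0 cats0 /= drop0.
  all: by case: b; rewrite /= inE eqxx.
Qed.

Lemma game_movesP b G G' :
  reflect (exists A p B r, [/\ G = A ++ p :: B, r \in part_moves b p & G' = A ++ r ++ B])
          (G' \in game_moves b G).
Proof.
apply: (iffP flatten_mapP) => [[j] | [A [p [B [r [-> mv_r ->]]]]]].
- rewrite mem_iota add0n => /andP [_ lt_j] /mapP [r mv_r ->].
  by exists (take j G), (nth [::] G j), (drop j.+1 G), r; rewrite -drop_nth ?cat_take_drop.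
- exists (size A); first by rewrite mem_iota size_cat /=; lia.
  rewrite -[size A]addn0 take_size_cat_add nth_size_cat -addnS drop_size_cat_add.
  by rewrite take0 cats0 /= drop0; apply: map_f.
Qed.

Lemma game_moves_cat b A B : game_moves b (A ++ B) =
  [seq A' ++ B | A' <- game_moves b A] ++ [seq A ++ B' | B' <- game_moves b B].
Proof.
rewrite /game_moves size_cat iotaD map_cat flatten_cat !map_flatten -!map_comp.
congr (flatten _ ++ flatten _).
- apply/eq_in_map => j; rewrite mem_iota add0n => /andP [_ lt_j] /=.
  rewrite -map_comp nth_cat lt_j (takel_cat _ (ltnW lt_j)) drop_cat_leq //.
  by apply: eq_map => r /=; rewrite !catA.
- rewrite add0n -{1}[size A]addn0 iotaDl -map_comp; apply/eq_map => j /=.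
  rewrite -map_comp nth_size_cat take_size_cat_add -addnS drop_size_cat_add.
  by apply: eq_map => r /=; rewrite !catA.
Qed.

Lemma stones_cat A B : stones (A ++ B) = stones A + stones B.
Proof. by rewrite /stones map_cat sumn_cat. Qed.

Lemma stones_cons p G : stones (p :: G) = size p + stones G.
Proof. by []. Qed.

Lemma stones_clean l : stones (clean l) = stones l.
Proof. by rewrite /stones /clean; elim: l => //= -[|x q] l /= ->. Qed.

Lemma stones_part_moves b p r : r \in part_moves b p -> (stones r).+1 = size p.
Proof.
case/part_movesP => u [v [[-> ->] | [-> ->]]];
  rewrite stones_clean /stones /= size_cat ?size_rcons /=; lia.
Qed.

Lemma stones_game_moves b G G' : G' \in game_moves b G -> (stones G').+1 = stones G.
Proof.
case/game_movesP => A [p [B [r [-> /stones_part_moves mv_r ->]]]].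
by rewrite !stones_cat !stones_cons -mv_r; lia.
Qed.

Lemma win_fuel b n m G : stones G < n -> stones G < m -> win b n G = win b m G.
Proof.
elim: n m b G => [|n IH] [|m] b G //= lt_n lt_m.
apply: eq_in_has => G' /stones_game_moves mv_G'.
by rewrite (IH m) //; lia.
Qed.

Lemma winS b n G : win b n.+1 G = has (fun G' => ~~ win (~~ b) n G') (game_moves b G).
Proof. by []. Qed.

Lemma first_winsE b G :
  first_wins b G = has (fun G' => ~~ first_wins (~~ b) G') (game_moves b G).
Proof.
rewrite {1}/first_wins winS; apply: eq_in_has => G' /stones_game_moves mv_G'.
by rewrite /first_wins (@win_fuel _ _ (stones G').+1) //; lia.
Qed.

Lemma negwK : involutive negw.
Proof. exact: mapK negbK. Qed.

Lemma stones_negw G : stones (map negw G) = stones G.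
Proof. by rewrite /stones -map_comp; congr sumn; apply: eq_map => p /=; rewrite size_map. Qed.

Lemma clean_map (f : word -> word) l :
  (forall q, size (f q) = size q) -> clean (map f l) = map f (clean l).
Proof.
move=> size_f; rewrite /clean filter_map; congr map.
by apply: eq_filter => q /=; rewrite -!size_eq0 size_f.
Qed.

Lemma part_moves_negw b p r :
  r \in part_moves b p -> map negw r \in part_moves (~~ b) (negw p).
Proof.
case/part_movesP => u [v E]; apply/part_movesP; exists (negw u), (negw v).
by case: E => -[-> ->]; [left | right];
  rewrite -(clean_map _ (size_map negb)) /negw map_cat /= ?map_rcons.
Qed.

Lemma game_moves_negw b G G' :
  G' \in game_moves b G -> map negw G' \in game_moves (~~ b) (map negw G).
Proof.
case/game_movesP => A [p [B [r [-> /part_moves_negw mv_r ->]]]]; apply/game_movesP.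
by exists (map negw A), (negw p), (map negw B), (map negw r); rewrite !map_cat.
Qed.

Lemma part_moves_rev b p r :
  r \in part_moves b p -> rev (map rev r) \in part_moves b (rev p).
Proof.
case/part_movesP => u [v E]; apply/part_movesP; exists (rev v), (rev u).
by case: E => -[-> ->]; [right | left];
  rewrite -(clean_map _ (@size_rev _)) /clean -filter_rev -map_rev /=
          rev_cat !rev_cons ?rev_rcons -!cats1 -!catA.
Qed.

Definition same_parts (G H : game) : Prop :=
  forall q, count (matches q) G = count (matches q) H.

Lemma matches_rev q p : matches q (rev p) = matches q p.
Proof. by rewrite /matches revK orbC. Qed.

Lemma matches_revl q p : matches (rev q) p = matches q p.
Proof. by rewrite /matches !(can2_eq revK revK) revK orbC. Qed.

Lemma matches_congr p p' q : matches p p' -> matches q p = matches q p'.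
Proof. by case/orP => /eqP ->; rewrite ?matches_rev. Qed.

Lemma perm_same_parts G H : perm_eq G H -> same_parts G H.
Proof. by move/permP => GH q; apply: GH. Qed.

Lemma same_parts_cat_cons A p p' B :
  matches p p' -> same_parts (A ++ p :: B) (A ++ p' :: B).
Proof. by move=> pp' q; rewrite !count_cat /= (matches_congr q pp'). Qed.

Lemma same_parts_rev_map r : same_parts r (rev (map rev r)).
Proof. by move=> q; rewrite count_rev count_map; apply: eq_count => p; rewrite /= matches_rev. Qed.

Lemma same_parts_split G H A p B : same_parts G H -> G = A ++ p :: B ->
  exists C p' D, [/\ H = C ++ p' :: D, matches p p' & same_parts (A ++ B) (C ++ D)].
Proof.
move=> GH GE; have : has (matches p) H.
  by rewrite has_count -GH GE count_cat /= /matches eqxx; lia.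
case/hasP => p' H_p' pp'; move: GH; case/splitPr: H_p' => C D GH.
exists C, p', D; split => // q.
by have := GH q; rewrite GE !count_cat /= (matches_congr q pp'); lia.
Qed.

Lemma same_parts_game_moves b G H G' : same_parts G H -> G' \in game_moves b G ->
  exists2 H', H' \in game_moves b H & same_parts G' H'.
Proof.
move=> GH /game_movesP [A [p [B [r [GE mv_r ->]]]]].
have [C [p' [D [-> pp' AB_CD]]]] := same_parts_split GH GE.
have [r' mv_r' rr'] : exists2 r', r' \in part_moves b p' & same_parts r r'.
  case/orP: pp' => /eqP pE; first by exists r; rewrite -?pE.
  exists (rev (map rev r)); last exact: same_parts_rev_map.
  by rewrite -(revK p') -pE part_moves_rev.
exists (C ++ r' ++ D); first by apply/game_movesP; exists C, p', D, r'.
by move=> q; have := AB_CD q; have := rr' q; rewrite !count_cat; lia.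
Qed.

Lemma first_wins_same_parts b G H : same_parts G H -> first_wins b G = first_wins b H.
Proof.
have sym G1 H1 : same_parts G1 H1 -> same_parts H1 G1 by move=> GH q; rewrite GH.
suff win_sim b1 G1 H1 : same_parts G1 H1 -> first_wins b1 G1 -> first_wins b1 H1.
  by move=> GH; apply/idP/idP; apply: win_sim => //; apply: sym.
have [n] := ubnP (stones G1 + stones H1).
elim: n => // n IH in b1 G1 H1 *; rewrite ltnS => le_n GH.
rewrite !first_winsE => /hasP [G' mv_G' lose_G'].
have [H' mv_H' G'H'] := same_parts_game_moves GH mv_G'.
apply/hasP; exists H' => //; apply: contra lose_G'; apply: IH (sym _ _ G'H').
by have := stones_game_moves mv_G'; have := stones_game_moves mv_H'; lia.
Qed.

Lemma first_wins_perm b G H : perm_eq G H -> first_wins b G = first_wins b H.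
Proof. by move/perm_same_parts/first_wins_same_parts. Qed.

Definition second_wins (G : game) : bool := ~~ first_wins true G && ~~ first_wins false G.

Lemma second_wins_mirror W : second_wins (W ++ map negw W).
Proof.
suff mirror_loses b : ~~ first_wins b (W ++ map negw W) by rewrite /second_wins !mirror_loses.
have [n] := ubnP (stones W); elim: n => // n IH in W b *; rewrite ltnS => le_n.
rewrite first_winsE; apply/hasPn => G'; rewrite game_moves_cat mem_cat negbK first_winsE.
case/orP => /mapP [W' mv_W' ->]; apply/hasP.
- exists (W' ++ map negw W'); last by rewrite negbK IH //; have := stones_game_moves mv_W'; lia.
  by rewrite game_moves_cat mem_cat map_f ?orbT ?game_moves_negw.
- have mv_nW' := game_moves_negw mv_W'; rewrite (mapK negwK) in mv_nW'.
  exists (map negw W' ++ W'); first by rewrite game_moves_cat mem_cat (map_f (cat^~ W') mv_nW').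
  rewrite negbK -{2}(mapK negwK W') IH //.
  by have := stones_game_moves mv_W'; rewrite !stones_negw; lia.
Qed.

Lemma first_wins_reply b G G' :
  ~~ first_wins (~~ b) G -> G' \in game_moves (~~ b) G -> first_wins b G'.
Proof. by rewrite first_winsE => /hasPn lose_G /lose_G; rewrite !negbK. Qed.

(* Z is at least 0 for c; the two halves go through a simultaneous induction. *)
Lemma first_wins_cat_nonneg c Z Y : ~~ first_wins (~~ c) Z ->
  (first_wins c Y -> first_wins c (Z ++ Y)) /\
  (~~ first_wins (~~ c) Y -> ~~ first_wins (~~ c) (Z ++ Y)).
Proof.
have [n] := ubnP (stones Z + stones Y).
elim: n => // n IH in Z Y *; rewrite ltnS => le_n lose_Z; split.
- rewrite !first_winsE => /hasP [Y' mv_Y' lose_Y']; apply/hasP; exists (Z ++ Y').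
    by rewrite game_moves_cat mem_cat map_f ?orbT.
  apply: (proj2 (IH Z Y' _ lose_Z)) => //; have := stones_game_moves mv_Y'; lia.
- move=> lose_Y; rewrite first_winsE; apply/hasPn => G'; rewrite game_moves_cat mem_cat !negbK.
  case/orP => /mapP [X' mv_X' ->].
  + have := first_wins_reply lose_Z mv_X'.
    rewrite [first_wins c X']first_winsE => /hasP [Z' mv_Z' lose_Z'].
    rewrite first_winsE; apply/hasP; exists (Z' ++ Y).
      by rewrite game_moves_cat mem_cat (map_f (cat^~ Y) mv_Z').
    apply: (proj2 (IH Z' Y _ lose_Z')) => //.
    by have := stones_game_moves mv_X'; have := stones_game_moves mv_Z'; lia.
  + apply: (proj1 (IH Z X' _ lose_Z)); last exact: first_wins_reply lose_Y mv_X'.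
    by have := stones_game_moves mv_X'; lia.
Qed.

Lemma first_wins_cat_second_wins c Z Y :
  second_wins Z -> first_wins c (Z ++ Y) = first_wins c Y.
Proof.
move=> /andP [lose_t lose_f]; have lose b : ~~ first_wins b Z by case: b.
apply/idP/idP; last exact: (proj1 (first_wins_cat_nonneg Y (lose (~~ c)))).
apply: contraLR; have := proj2 (first_wins_cat_nonneg Y (lose (~~ ~~ c))).
by rewrite negbK.
Qed.

Lemma first_wins_replace c p rs Y : second_wins (p :: map negw rs) ->
  first_wins c (p :: Y) = first_wins c (rs ++ Y).
Proof.
move=> zero_p_rs; have := second_wins_mirror (map negw rs); rewrite (mapK negwK) => zero_rs.
rewrite -(first_wins_cat_second_wins c (p :: Y) zero_rs).
rewrite -(first_wins_cat_second_wins c (rs ++ Y) zero_p_rs).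
by apply: first_wins_perm; apply/permP => a; rewrite !count_cat /=; lia.
Qed.

(* vm_compute evaluates both arguments of the || inside has, hence the whole
   game tree; win_lazy stops at the first winning move. *)
Fixpoint win_lazy (b : bool) (n : nat) (G : game) : bool :=
  if n is n'.+1 then
    (fix any (Gs : seq game) := if Gs is G' :: Gs' then
       (if win_lazy (~~ b) n' G' then any Gs' else true) else false) (game_moves b G)
  else false.

Lemma win_lazyE b n G : win_lazy b n G = win b n G.
Proof.
elim: n b G => // n IH b G /=; elim: (game_moves b G) => //= G' Gs ->.
by rewrite IH; case: win.
Qed.

Definition second_wins_lazy (G : game) : bool :=
  ~~ win_lazy true (stones G).+1 G && ~~ win_lazy false (stones G).+1 G.

Definition sound_rule (r : Rule) : bool :=
  if r is Simple rs then all (fun lr => second_wins (lr.1 :: map negw lr.2)) rs else true.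

Lemma asf_rules_sound : all sound_rule asf_rules.
Proof.
have : all (fun r => if r is Simple rs then
             all (fun lr => second_wins_lazy (lr.1 :: map negw lr.2)) rs else true) asf_rules.
  by vm_compute.
apply: sub_all => -[rs|] //; apply: sub_all => lr.
by rewrite /second_wins_lazy !win_lazyE.
Qed.

Definition part_weight (p : word) : nat :=
  if matches p [:: cO; cX] then 1
  else if matches p [:: cO; cX; cO; cX] then 2
  else if matches p [:: cO; cO; cX; cO] || matches p [:: cX; cX; cO; cX] then 6
  else (size p).+1.

Definition game_weight (G : game) : nat := sumn (map part_weight G).

Definition decreasing_rule (r : Rule) : bool :=
  if r is Simple rs then all (fun lr => game_weight lr.2 < part_weight lr.1) rs else true.

Lemma asf_rules_decreasing : all decreasing_rule asf_rules.
Proof. by []. Qed.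

Lemma part_weight_gt0 p : 0 < part_weight p.
Proof. by rewrite /part_weight; repeat case: ifP. Qed.

Lemma part_weight_matches q p : matches q p -> part_weight q = part_weight p.
Proof. by case/orP => /eqP ->; rewrite /part_weight ?matches_revl ?size_rev. Qed.

Lemma perm_del2 (G : game) i j : i < size G -> j < size G -> i != j ->
  perm_eq G [:: nth [::] G i, nth [::] G j & del2 i j G].
Proof.
move=> lt_i lt_j ne_ij; set s := iota 0 (size G).
have s_i : i \in s by rewrite mem_iota.
have s_j : j \in [seq k <- s | predC1 i k] by rewrite mem_filter /= eq_sym ne_ij mem_iota.
have perm_s : perm_eq s [:: i, j & [seq k <- s | (k != i) && (k != j)]].
  rewrite (perm_trans (perm_to_rem s_i)) // perm_cons rem_filter ?iota_uniq //.
  rewrite (perm_trans (perm_to_rem s_j)) // perm_cons rem_filter ?filter_uniq ?iota_uniq //.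
  rewrite -filter_predI (@eq_filter _ _ (fun k => (k != i) && (k != j))) //.
  by move=> k /=; rewrite andbC.
by rewrite /del2 -{1}(mkseq_nth [::] G); exact: perm_map perm_s.
Qed.

Lemma mem_simple_results rs G H : H \in rule_results (Simple rs) G ->
  exists A q B lr, [/\ G = A ++ q :: B, lr \in rs, matches q lr.1 & H = A ++ lr.2 ++ B].
Proof.
case/flatten_mapP => i; rewrite mem_iota add0n => /andP [_ lt_i] /mapP [lr].
rewrite mem_filter => /andP [q_lr rs_lr] ->.
by exists (take i G), (nth [::] G i), (drop i.+1 G), lr; rewrite -drop_nth ?cat_take_drop.
Qed.

Lemma mem_beta_results G H : H \in rule_results Beta G ->
  exists p q, matches q (negw p) /\ perm_eq G [:: p, q & H].
Proof.
case/flatten_mapP => i; rewrite mem_iota add0n => /andP [_ lt_i] /mapP [j].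
rewrite mem_filter mem_iota add0n => /andP [/andP [ne_ij q_p] /andP [_ lt_j]] ->.
by exists (nth [::] G i), (nth [::] G j); split; last exact: perm_del2.
Qed.

Lemma game_equiv_by_first_wins G H :
  (forall c X, first_wins c (G ++ X) = first_wins c (H ++ X)) -> game_equiv G H.
Proof. by move=> GH X _; rewrite /outcome !GH. Qed.

Lemma sound_rule_equiv r G H : sound_rule r -> H \in rule_results r G -> game_equiv G H.
Proof.
case: r => [rs /allP sound_rs | _] res_H; apply: game_equiv_by_first_wins => c X.
- have [A [q [B [[l1 l2] [-> rs_lr q_l1 ->]]]]] := mem_simple_results res_H.
  rewrite -!catA (first_wins_perm c (perm_cat_cons A (B ++ X) q)).
  rewrite (first_wins_same_parts c (same_parts_cat_cons [::] _ q_l1)) /=.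
  rewrite (@first_wins_replace c l1 l2 _ (sound_rs _ rs_lr)).
  by apply: first_wins_perm; apply/permPl/perm_catCA.
- have [p [q [q_np perm_G]]] := mem_beta_results res_H.
  rewrite (first_wins_perm c (_ : perm_eq _ ([:: p, q & H] ++ X))) ?perm_cat2r //.
  rewrite (first_wins_same_parts c (same_parts_cat_cons [:: p] _ q_np)).
  exact: (first_wins_cat_second_wins c _ (second_wins_mirror [:: p])).
Qed.

Lemma decreasing_rule_weight r G H : decreasing_rule r -> H \in rule_results r G ->
  game_weight H < game_weight G.
Proof.
case: r => [rs /allP dec_rs | _] res_H.
- have [A [q [B [lr [-> rs_lr q_l1 ->]]]]] := mem_simple_results res_H.
  rewrite /game_weight !map_cat !sumn_cat /= (part_weight_matches q_l1) ltn_add2l ltn_add2r.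
  exact: dec_rs.
- have [p [q [_ perm_G]]] := mem_beta_results res_H.
  rewrite /game_weight (perm_sumn (perm_map part_weight perm_G)) /= addnA.
  by rewrite -[X in X < _]add0n ltn_add2r addn_gt0 part_weight_gt0.
Qed.

Lemma asf_step_rule (P : pred Rule) G H :
  all P asf_rules -> asf_step G H -> exists2 r, P r & H \in rule_results r G.
Proof.
move=> /(all_nthP Beta) P_rules [k [lt_k [res_H _]]].
by exists (nth Beta asf_rules k); first exact: P_rules.
Qed.

Lemma asf_step_equiv G H : asf_step G H -> game_equiv G H.
Proof.
move=> step; have [r sound_r res_H] := asf_step_rule asf_rules_sound step.
exact: sound_rule_equiv sound_r res_H.
Qed.

Lemma asf_step_weight G H : asf_step G H -> game_weight H < game_weight G.
Proof.
move=> step; have [r dec_r res_H] := asf_step_rule asf_rules_decreasing step.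
exact: decreasing_rule_weight dec_r res_H.
Qed.

Lemma asf_step_acc G : Acc (fun H' H => asf_step H H') G.
Proof.
have [n] := ubnP (game_weight G); elim: n => [|n IH] in G *; first by rewrite ltn0.
rewrite ltnS => le_n.
by constructor => H /asf_step_weight lt_H; apply: IH; apply: leq_trans le_n.
Qed.

Lemma asf_star_equiv G H : asf_star G H -> game_equiv G H.
Proof. by elim=> // G1 G2 G3 /asf_step_equiv eq12 _ eq23 X X_parts; rewrite eq12 ?eq23. Qed.

Theorem theorem2 (G : game) :
  alc G ->
  Acc (fun H' H => asf_step H H') G /\
  (forall H, asf_star G H -> asf_normal H -> game_equiv G H).
Proof. by move=> _; split=> [|H /asf_star_equiv]; first exact: asf_step_acc. Qed.
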